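(* Let $\Omega\subset\mathbb R^d$ be compact and let $m\ge2$ be an integer. Then the set of restrictions to $\Omega$ of the maps $$\mathbf x\mapsto\mathbf W^T\boldsymbol\sigma(\mathbf W\mathbf x),\qquad p\in\mathbb N,\ \mathbf W\in\mathbb R^{p\times d},\ \sigma_i\in\mathcal{LS}^m_{\uparrow}(\mathbb R),$$ is dense in $\mathcal E(\Omega)$ with respect to the norm $\|\mathbf f\|_{C(\Omega)}=\sup_{\mathbf x\in\Omega}\|\mathbf f(\mathbf x)\|$.
   Context: $\boldsymbol\sigma$ acts componentwise: $(\boldsymbol\sigma(\mathbf z))_i=\sigma_i(z_i)$. $\mathcal{LS}^m_{\uparrow}(\mathbb R)$ is the set of increasing continuous piecewise-linear functions (linear splines) $\mathbb R\to\mathbb R$ with at most $m$ knots. $C^{0,1}_{\uparrow}(\mathbb R)$ denotes the set of Lipschitz-continuous increasing functions $\mathbb R\to\mathbb R$. $\mathcal E(\mathbb R^d)$ is the set of maps $\mathbf x\mapsto\mathbf W^T\boldsymbol\sigma(\mathbf W\mathbf x)$ with $p\in\mathbb N$, $\mathbf W\in\mathbb R^{p\times d}$ and each $\sigma_i\in C^{0,1}_{\uparrow}(\mathbb R)$; $\mathcal E(\Omega)$ is the set of restrictions to $\Omega$ of elements of $\mathcal E(\mathbb R^d)$. *)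

From HB Require Import structures.
From mathcomp Require Import all_boot all_order all_algebra.
From mathcomp Require Import all_classical all_reals all_analysis.
Set Implicit Arguments. Unset Strict Implicit. Unset Printing Implicit Defensive.
Import Order.TTheory GRing.Theory Num.Theory.
Import numFieldNormedType.Exports.
Local Open Scope ring_scope.
Local Open Scope classical_set_scope.

Definition eucl_norm (R : realType) (d : nat) (v : 'cV[R]_d) : R :=
  Num.sqrt (\sum_(i < d) (v i 0) ^+ 2).

(* increasing (= nondecreasing) functions R -> R *)
Definition nondecr_fun (R : realType) (s : R -> R) : Prop :=
  forall x y : R, x <= y -> s x <= s y.

Definition lip_incr (R : realType) (s : R -> R) : Prop :=
  (exists L : R, forall x y : R, `|s x - s y| <= L * `|x - y|) /\ nondecr_fun s.

(* LS^m_increasing(R): increasing continuous piecewise-linear functions with at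
   most m knots: there is a list of at most m knots such that s is affine on
   every closed interval containing no knot in its interior. *)
Definition lin_spline_incr (R : realType) (m : nat) (s : R -> R) : Prop :=
  continuous s /\ nondecr_fun s /\
  exists knots : seq R, (size knots <= m)%N /\
    forall a b : R, a <= b ->
      (forall t, t \in knots -> ~ (a < t /\ t < b)) ->
      forall l : R, 0 <= l -> l <= 1 ->
        s ((1 - l) * a + l * b) = (1 - l) * s a + l * s b.

Definition sigma_vec (R : realType) (p : nat) (sig : 'I_p -> R -> R)
  (z : 'cV[R]_p) : 'cV[R]_p := \col_i sig i (z i 0).

Definition grad_map (R : realType) (d p : nat) (W : 'M[R]_(p, d))
  (sig : 'I_p -> R -> R) (x : 'cV[R]_d) : 'cV[R]_d :=
  W^T *m sigma_vec sig (W *m x).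

(* Let B bound the pre-activations W x on the compact set Omega.  A Lipschitz
   increasing activation is approximated uniformly on [-B, B], with error at most
   L * 2B / N, by its piecewise linear interpolant on N equal cells, and that
   interpolant is a sum of N increasing ramps c + s * clamp t_k t_(k+1), each a
   linear spline with two knots.  Splitting neuron i into N neurons with the same
   weight row and these ramps as activations realises W^T sigma~(W x), whose
   distance to W^T sigma(W x) is controlled by sup |sigma - sigma~| on [-B, B]. *)

From HB Require Import structures.
From mathcomp Require Import all_boot all_order all_algebra.
From mathcomp Require Import all_classical all_reals all_analysis.
From mathcomp Require Import ring lra.
Import Order.TTheory GRing.Theory Num.Theory.
Import numFieldNormedType.Exports.
Set Implicit Arguments. Unset Strict Implicit. Unset Printing Implicit Defensive.
Local Open Scope ring_scope.
Local Open Scope classical_set_scope.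

Section Clamp.
Variable R : realType.
Implicit Types a b c s x y : R.

Definition clamp a b x : R := Num.min (Num.max x a) b.

Lemma clamp_id a b x : a <= x -> x <= b -> clamp a b x = x.
Proof. by move=> ax xb; rewrite /clamp max_l // min_l. Qed.

Lemma clamp_lo a b x : a <= b -> x <= a -> clamp a b x = a.
Proof. by move=> ab xa; rewrite /clamp max_r // min_l. Qed.

Lemma clamp_hi a b x : a <= b -> b <= x -> clamp a b x = b.
Proof. by move=> ab bx; rewrite /clamp max_l ?(le_trans ab) // min_r. Qed.

Lemma clamp_in a b x : a <= b -> a <= clamp a b x <= b.
Proof. by move=> ab; rewrite /clamp le_min le_max lexx orbT ab ge_min lexx orbT. Qed.

Lemma clamp_nondecr a b : nondecr_fun (clamp a b).
Proof. by move=> x y xy; rewrite /clamp le_min2 // le_max2. Qed.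

Lemma clamp_continuous a b : continuous (clamp a b).
Proof.
move=> x; apply: (@continuous_min R R (fun t => Num.max t a) (fun=> b)).
  by apply: (@continuous_max R R id (fun=> a)) => //; exact: cst_continuous.
exact: cst_continuous.
Qed.

Lemma lin_spline_incr_clamp m a b :
  (2 <= m)%N -> a <= b -> lin_spline_incr m (clamp a b).
Proof.
move=> m2 ab; split; first exact: clamp_continuous.
split; first exact: clamp_nondecr.
exists [:: a; b]; split => // a' b' ab' knot_free l l0 l1.
have not_a : ~ (a' < a /\ a < b') by apply: knot_free; rewrite !inE eqxx.
have not_b : ~ (a' < b /\ b < b') by apply: knot_free; rewrite !inE eqxx orbT.
have z_in : a' <= (1 - l) * a' + l * b' <= b' by apply/andP; split; nra.
suff [k [e affine]] : exists k e, forall y, a' <= y <= b' -> clamp a b y = k * y + e.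
  by rewrite !affine ?z_in ?lexx ?ab' //; ring.
case: (lerP b' a) => b'a.
  by exists 0, a => y /andP[_ yb']; rewrite (clamp_lo ab (le_trans yb' b'a)); ring.
have aa' : a <= a' by rewrite leNgt; apply/negP => a'a; apply: not_a.
case: (lerP b a') => ba'.
  by exists 0, b => y /andP[a'y _]; rewrite (clamp_hi ab (le_trans ba' a'y)); ring.
have b'b : b' <= b by rewrite leNgt; apply/negP => bb'; apply: not_b.
by exists 1, 0 => y /andP[a'y yb']; rewrite clamp_id ?(le_trans aa' a'y) ?(le_trans yb' b'b) //; ring.
Qed.

Lemma lin_spline_incr_affine m c s (f : R -> R) :
  0 <= s -> lin_spline_incr m f -> lin_spline_incr m (fun t => c + s * f t).
Proof.
move=> s0 [f_cont [f_mono [knots [size_knots f_affine]]]]; split.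
  by move=> x; apply: cvgD; [exact: cvg_cst | apply: cvgM; [exact: cvg_cst | exact: f_cont]].
split; first by move=> x y xy; rewrite lerD2l; apply: ler_wpM2l => //; apply: f_mono.
exists knots; split => // a b ab knot_free l l0 l1.
by rewrite f_affine //; ring.
Qed.

End Clamp.

Section RampInterpolation.
Variables (R : realType) (f : R -> R) (a h : R).
Hypothesis f_nondecr : nondecr_fun f.
Hypothesis h_gt0 : 0 < h.

Definition knot (k : nat) : R := a + k%:R * h.

Definition ramp_term (k : nat) (x : R) : R :=
  (f (knot k.+1) - f (knot k)) / h * (clamp (knot k) (knot k.+1) x - knot k).

Lemma knot0 : knot 0 = a.
Proof. by rewrite /knot mul0r addr0. Qed.

Lemma knotS k : knot k.+1 = knot k + h.
Proof. by rewrite /knot -natr1 mulrDl mul1r addrA. Qed.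

Lemma knot_le_succ k : knot k <= knot k.+1.
Proof. by rewrite knotS lerDl (ltW h_gt0). Qed.

Lemma knot_nondecr k k' : (k <= k')%N -> knot k <= knot k'.
Proof. by move=> kk'; rewrite lerD2l; apply: ler_wpM2r; rewrite ?ler_nat ?(ltW h_gt0). Qed.

Lemma ramp_term_below k x : x <= knot k -> ramp_term k x = 0.
Proof. by move=> xk; rewrite /ramp_term (clamp_lo (knot_le_succ k) xk) subrr mulr0. Qed.

Lemma ramp_term_above k x :
  knot k.+1 <= x -> ramp_term k x = f (knot k.+1) - f (knot k).
Proof.
move=> kx; rewrite /ramp_term (clamp_hi (knot_le_succ k) kx).
have -> : knot k.+1 - knot k = h by rewrite knotS addrAC subrr add0r.
by rewrite divfK ?gt_eqF.
Qed.

Lemma ramp_term_bounds k x : 0 <= ramp_term k x <= f (knot k.+1) - f (knot k).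
Proof.
have /andP[lo hi] := clamp_in x (knot_le_succ k).
have incr_ge0 : 0 <= f (knot k.+1) - f (knot k).
  by rewrite subr_ge0; apply/f_nondecr/knot_le_succ.
have frac_in : 0 <= (clamp (knot k) (knot k.+1) x - knot k) / h <= 1.
  by rewrite divr_ge0 ?subr_ge0 ?(ltW h_gt0) //= ler_pdivrMr // mul1r lerBlDl -knotS.
case/andP: frac_in => frac0 frac1.
by rewrite /ramp_term mulrAC -mulrA mulr_ge0 // ler_piMr.
Qed.

Lemma ramp_sum_above n x :
  knot n <= x -> \sum_(k < n) ramp_term k x = f (knot n) - f (knot 0).
Proof.
move=> nx; rewrite -(big_mkord xpredT (ramp_term^~ x)).
apply: (telescope_sumr_eq (f \o knot)) => // k /andP[_ kn].
by rewrite ramp_term_above // (le_trans (knot_nondecr kn) nx).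
Qed.

(* On [knot k, knot k.+1] the sum is the chord of [f] between these knots, so it
   lies between [f (knot k)] and [f (knot k.+1)], as does [f]. *)
Lemma ramp_sum_interpolates n x (delta : R) : 0 <= delta ->
  (forall k, (k < n)%N -> f (knot k.+1) - f (knot k) <= delta) ->
  knot 0 <= x <= knot n ->
  `|f x - (f (knot 0) + \sum_(k < n) ramp_term k x)| <= delta.
Proof.
move=> delta0; elim: n => [|n IHn] incr_le /andP[x0 xn].
  by rewrite big_ord0 addr0 (@le_anti _ _ x (knot 0)) ?x0 ?xn // subrr normr0.
rewrite big_ord_recr /=.
case: (lerP x (knot n)) => [x_le|x_gt].
  rewrite ramp_term_below // addr0 IHn ?x0 ?x_le // => k kn.
  by rewrite incr_le // ltnS ltnW.
rewrite ramp_sum_above ?(ltW x_gt) //.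
have /andP[t0 t1] := ramp_term_bounds n x.
have f_lo := f_nondecr (ltW x_gt).
have f_hi := f_nondecr xn.
have := incr_le n (ltnSn n).
rewrite ler_norml.
move: t0 t1 f_lo f_hi; lra.
Qed.

End RampInterpolation.

Section RampPieces.
Variables (R : realType) (f : R -> R) (a b : R) (N : nat).
Hypothesis f_nondecr : nondecr_fun f.
Hypothesis ab : a < b.
Hypothesis N_gt0 : (0 < N)%N.

Let h : R := (b - a) / N%:R.

Let h_gt0 : 0 < h.
Proof. by rewrite divr_gt0 ?subr_gt0 ?ltr0n. Qed.

Let knotN : knot a h N = b.
Proof. by rewrite /knot /h [_%:R * _]mulrC divfK ?pnatr_eq0 -?lt0n // addrC subrK. Qed.

(* [f a] is shared equally among the pieces so that they all have the same shape. *)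
Definition ramp_piece (k : nat) (t : R) : R := f a / N%:R + ramp_term f a h k t.

Lemma lin_spline_incr_ramp_piece m k : (2 <= m)%N -> lin_spline_incr m (ramp_piece k).
Proof.
move=> m2; set s := (f (knot a h k.+1) - f (knot a h k)) / h.
have -> : ramp_piece k = fun t => (f a / N%:R - s * knot a h k) + s * clamp (knot a h k) (knot a h k.+1) t.
  by apply: funext => t; rewrite /ramp_piece /ramp_term -/s; ring.
apply: lin_spline_incr_affine; last exact: lin_spline_incr_clamp (knot_le_succ _ h_gt0 _).
by rewrite divr_ge0 ?subr_ge0 ?(ltW h_gt0) //; apply/f_nondecr/knot_le_succ.
Qed.

Lemma ramp_pieces_approx (L t : R) :
  (forall x y, `|f x - f y| <= L * `|x - y|) -> a <= t <= b ->
  `|f t - \sum_(k < N) ramp_piece k t| <= L * ((b - a) / N%:R).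
Proof.
move=> f_lip t_in.
have -> : \sum_(k < N) ramp_piece k t = f (knot a h 0) + \sum_(k < N) ramp_term f a h k t.
  rewrite big_split /= sumr_const card_ord knot0 -[_ *+ N]mulr_natr divfK //.
  by rewrite pnatr_eq0 -lt0n.
apply: ramp_sum_interpolates => //; last by rewrite knot0 knotN.
- have := f_lip (a + h) a; rewrite addrAC subrr add0r (gtr0_norm h_gt0).
  exact: le_trans (normr_ge0 _).
- move=> k _; apply: le_trans (ler_norm _) (le_trans (f_lip _ _) _).
  by rewrite knotS addrAC subrr add0r (gtr0_norm h_gt0).
Qed.

End RampPieces.

Lemma lipschitz_uniform (R : realType) (I : finType) (f : I -> R -> R) :
  (forall i, exists L, forall x y, `|f i x - f i y| <= L * `|x - y|) ->
  exists L, forall i x y, `|f i x - f i y| <= L * `|x - y|.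
Proof.
move=> /choice[L f_lip]; exists (\sum_i `|L i|) => i x y.
apply: le_trans (f_lip i x y) (ler_wpM2r (normr_ge0 _) _).
apply: le_trans (ler_norm _) _.
rewrite (bigD1 i) //= lerDl; exact: sumr_ge0.
Qed.

Lemma exists_nat_ratio_le (R : realType) (c delta : R) :
  0 < delta -> exists N : nat, (0 < N)%N /\ c / N%:R <= delta.
Proof.
move=> delta_gt0; set M := Num.bound (`|c| / delta).
have M_gt : `|c| / delta < M.+1%:R.
  by apply: lt_trans (archi_boundP (divr_ge0 (normr_ge0 c) (ltW delta_gt0))) _; rewrite ltr_nat.
exists M.+1; split => //.
rewrite ler_pdivrMr ?ltr0n // mulrC; apply: le_trans (ler_norm c) _.
by rewrite -ler_pdivrMr // ltW.
Qed.

Section MatrixNorm.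
Variable R : realType.

Lemma mx_norm_entry_le m n (A : 'M[R]_(m, n)) i j : `|A i j| <= `|A|.
Proof.
rewrite [leRHS]/Num.Def.normr /= mx_normrE; apply/bigmax_geP; right.
by exists (i, j).
Qed.

Lemma mx_norm_le m n (A : 'M[R]_(m, n)) (c : R) :
  0 <= c -> (forall i j, `|A i j| <= c) -> `|A| <= c.
Proof.
move=> c0 A_le; rewrite [leLHS]/Num.Def.normr /= mx_normrE.
by apply: bigmax_le => // -[i j].
Qed.

Lemma mx_norm_mulmx_le m n k (A : 'M[R]_(m, n)) (B : 'M[R]_(n, k)) :
  `|A *m B| <= (\sum_i \sum_j `|A i j|) * `|B|.
Proof.
apply: mx_norm_le => [|i l].
  by apply: mulr_ge0 => //; apply: sumr_ge0 => i _; apply: sumr_ge0.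
rewrite mxE; apply: le_trans (ler_norm_sum _ _ _) _.
apply: le_trans (_ : \sum_j `|A i j| * `|B| <= _).
  by apply: ler_sum => j _; rewrite normrM; apply: ler_wpM2l => //; apply: mx_norm_entry_le.
rewrite -mulr_suml; apply: ler_wpM2r => //.
rewrite (bigD1 i) //= lerDl.
by apply: sumr_ge0 => i' _; apply: sumr_ge0.
Qed.

Lemma eucl_norm_le_mx_norm d (v : 'cV[R]_d) : eucl_norm v <= d%:R * `|v|.
Proof.
rewrite /eucl_norm -[leRHS]ger0_norm ?mulr_ge0 // -sqrtr_sqr ler_sqrt ?sqr_ge0 //.
apply: le_trans (_ : \sum_(i < d) `|v|^+2 <= _).
  apply: ler_sum => i _; rewrite -real_normK ?num_real // lerXn2r ?nnegrE //.
  exact: mx_norm_entry_le.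
rewrite sumr_const card_ord -[_ *+ d]mulr_natl exprMn; apply: ler_wpM2r; first exact: sqr_ge0.
by rewrite -natrX ler_nat; case: d {v} => // d; apply: leq_pmulr.
Qed.

End MatrixNorm.

Section SplitNeurons.
Variables (R : realType) (p N d : nat).

(* Neurons are indexed by the pairs (i, k) through [enum_val]; neuron (i, k) has
   weight row [i] of [W] and activation [tau i k]. *)
Definition split_weights (W : 'M[R]_(p, d)) : 'M[R]_(#|{: 'I_p * 'I_N}|, d) :=
  \matrix_(j, c) W (enum_val j).1 c.

Definition split_activations (tau : 'I_p -> 'I_N -> R -> R) :
  'I_#|{: 'I_p * 'I_N}| -> R -> R :=
  fun j => tau (enum_val j).1 (enum_val j).2.

Lemma grad_map_split W tau x :
  grad_map (split_weights W) (split_activations tau) x =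
  grad_map W (fun i t => \sum_(k < N) tau i k t) x.
Proof.
apply/matrixP => c l; rewrite !mxE.
have row_eq j : (split_weights W *m x) j 0 = (W *m x) (enum_val j).1 0.
  by rewrite !mxE; apply: eq_bigr => c' _; rewrite mxE.
under eq_bigr do rewrite [sigma_vec _ _ _ _]mxE row_eq 2!mxE.
rewrite -(big_enum_val (fun u : 'I_p * 'I_N => W u.1 c * tau u.1 u.2 ((W *m x) u.1 0))) /=.
rewrite -(pair_big xpredT xpredT (fun i k => W i c * tau i k ((W *m x) i 0))) /=.
by apply: eq_bigr => i _; rewrite [sigma_vec _ _ _ _]mxE [W^T c i]mxE mulr_sumr.
Qed.

End SplitNeurons.

Lemma grad_mapB (R : realType) (p d : nat) (W : 'M[R]_(p, d)) (sig tau : 'I_p -> R -> R) x :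
  grad_map W sig x - grad_map W tau x = W^T *m (sigma_vec sig (W *m x) - sigma_vec tau (W *m x)).
Proof. by rewrite /grad_map mulmxBr. Qed.

Lemma compact_mulmx_bounded (R : realType) (p d : nat) (W : 'M[R]_(p, d))
    (Omega : set 'cV[R]_d) :
  compact Omega -> exists B : R, 0 < B /\ forall x, Omega x -> `|W *m x| <= B.
Proof.
move=> /compact_bounded[M [_ Omega_le]].
set C := \sum_i \sum_j `|W i j|.
have C_ge0 : 0 <= C by apply: sumr_ge0 => i _; apply: sumr_ge0.
exists (C * (`|M| + 1) + 1); split; first by rewrite ltr_pwDr // mulr_ge0.
move=> x Omega_x; apply: le_trans (mx_norm_mulmx_le W x) _.
apply: le_trans (_ : C * (`|M| + 1) <= _); last by rewrite lerDl.
apply: ler_wpM2l => //; apply: Omega_le => //.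
by apply: le_lt_trans (ler_norm M) _; rewrite ltrDl.
Qed.

Theorem proposition4 (R : realType) (d m : nat) (Omega : set 'cV[R]_d) :
  compact Omega -> (2 <= m)%N ->
  forall (p : nat) (W : 'M[R]_(p, d)) (sig : 'I_p -> R -> R),
    (forall i, lip_incr (sig i)) ->
    forall eps : R, 0 < eps ->
    exists (q : nat) (V : 'M[R]_(q, d)) (tau : 'I_q -> R -> R),
      (forall i, lin_spline_incr m (tau i)) /\
      (forall x, Omega x ->
         eucl_norm (grad_map W sig x - grad_map V tau x) <= eps).
Proof.
move=> Omega_compact m2 p W sig sig_lip_incr eps eps_gt0.
have [B [B_gt0 WxB]] := compact_mulmx_bounded W Omega_compact.
have [L sig_lip] := lipschitz_uniform (fun i => (sig_lip_incr i).1).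
set C := \sum_i \sum_j `|W^T i j|.
have C_ge0 : 0 <= C by apply: sumr_ge0 => i _; apply: sumr_ge0.
have dC1_gt0 : 0 < d%:R * C + 1 by rewrite ltr_pwDr ?mulr_ge0.
set delta := eps / (d%:R * C + 1).
have delta_gt0 : 0 < delta by rewrite divr_gt0.
have [N [N_gt0 N_le]] := exists_nat_ratio_le (L * (B - - B)) delta_gt0.
pose tau i (k : 'I_N) := ramp_piece (sig i) (- B) B N k.
have mB_lt_B : - B < B by rewrite gtrN.
exists _, (split_weights N W), (split_activations tau); split.
  by move=> j; apply: lin_spline_incr_ramp_piece => //; apply: (sig_lip_incr _).2.
move=> x Omega_x; rewrite grad_map_split grad_mapB.
move: (W *m x) (WxB x Omega_x) => y y_le; set err := _ - _.
have err_le : `|err| <= delta.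
  apply: mx_norm_le => [|i l]; first exact: ltW.
  rewrite -mulrA in N_le; rewrite /err !mxE; apply: le_trans N_le.
  apply: ramp_pieces_approx => //; first exact: (sig_lip_incr i).2.
  by rewrite -ler_norml; apply: le_trans (mx_norm_entry_le y i 0) y_le.
apply: le_trans (eucl_norm_le_mx_norm _) _.
apply: le_trans (ler_wpM2l (ler0n _ d) (mx_norm_mulmx_le _ _)) _.
rewrite mulrA -/C.
apply: le_trans (ler_wpM2l (mulr_ge0 (ler0n _ d) C_ge0) err_le) _.
rewrite /delta mulrA ler_pdivrMr // mulrC; apply: ler_wpM2l; [exact: ltW | by rewrite lerDl].
Qed.
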